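(* Let $\delta>2\epsilon>0$, $u=\frac1{\sqrt2}(-1,1)^\top$, $v=\frac1{\sqrt2}(1,1)^\top$, and let $Z_1,Z_2$ be i.i.d. Bernoulli$(1/2)$. Define $g_1=\frac\delta2u+\epsilon(2Z_1-1)v$, $g_2=\frac\delta2u+\epsilon(2Z_2-1)v$, $g_3=-\delta u$ in $\mathbb R^2$, all three clients honest. Then $\mathbb E\mu=\frac13(\mathbb Eg_1+\mathbb Eg_2+\mathbb Eg_3)=0$, $\mathbb E\|g_i-\mathbb Eg_i\|_2^2\le\epsilon^2$ and $\|\mathbb Eg_i-\mathbb E\mu\|_2\le\delta$ for $i=1,2,3$, and: (a) if $\hat\mu$ is the coordinate-wise median of $g_1,g_2,g_3$, then $\mathbb E\|\hat\mu-\mathbb E\mu\|_2^2>\frac{\delta^2}8+\frac{\epsilon^2}2$; (b) if $\hat\mu$ is the geometric median $\arg\min_x\sum_{i=1}^3\|x-g_i\|_2$, then $\mathbb E\|\hat\mu-\mathbb E\mu\|_2^2>\frac{\delta^2}8+\frac{\epsilon^2}2$; (c) if $\hat\mu$ is the Krum output, i.e. a $g_i$ minimizing $\min_{j\ne i}\|g_i-g_j\|_2^2$ (ties broken arbitrarily), then $\|\hat\mu-\mathbb E\mu\|_2^2=\epsilon^2+\frac{\delta^2}4$ always.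
   Context: This example has no Byzantine clients; it shows that these aggregation rules have gradient estimation error of order $\epsilon^2+\delta^2$ even without attack. *)

From HB Require Import structures.
From mathcomp Require Import all_boot all_order all_algebra.
Set Implicit Arguments. Unset Strict Implicit. Unset Printing Implicit Defensive.
Import Order.TTheory GRing.Theory Num.Theory.
Local Open Scope ring_scope.

Section Defs.
Variable R : rcfType.

Definition vec := (R * R)%type.
Definition vadd (x y : vec) : vec := (x.1 + y.1, x.2 + y.2).
Definition vsub (x y : vec) : vec := (x.1 - y.1, x.2 - y.2).
Definition vscale (a : R) (x : vec) : vec := (a * x.1, a * x.2).
Definition vzero : vec := (0, 0).
Definition vnorm2 (x : vec) : R := x.1 ^+ 2 + x.2 ^+ 2.
Definition vnorm (x : vec) : R := Num.sqrt (vnorm2 x).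

Definition uvec : vec := (- (1 / Num.sqrt 2), 1 / Num.sqrt 2).
Definition vvec : vec := (1 / Num.sqrt 2, 1 / Num.sqrt 2).

(* Outcome space of (Z1, Z2), i.i.d. Bernoulli(1/2): uniform on bool * bool,
   Z_k = 1 iff the k-th boolean is true. *)
Definition outcome := (bool * bool)%type.
Definition bern (b : bool) : R := (b : nat)%:R.

Definition Ex (f : outcome -> R) : R := (1 / 4) * \sum_(z : outcome) f z.
Definition Evec (f : outcome -> vec) : vec :=
  (Ex (fun z => (f z).1), Ex (fun z => (f z).2)).

Definition grad (eps delta : R) (z : outcome) (i : 'I_3) : vec :=
  match val i with
  | 0 => vadd (vscale (delta / 2) uvec) (vscale (eps * (2 * bern z.1 - 1)) vvec)
  | 1 => vadd (vscale (delta / 2) uvec) (vscale (eps * (2 * bern z.2 - 1)) vvec)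
  | _ => vscale (- delta) uvec
  end.

Definition g0 : 'I_3 := inord 0.
Definition g1 : 'I_3 := inord 1.
Definition g2 : 'I_3 := inord 2.

Definition muavg (eps delta : R) (z : outcome) : vec :=
  vscale (1 / 3) (vadd (grad eps delta z g0)
                       (vadd (grad eps delta z g1) (grad eps delta z g2))).

Definition med3 (a b c : R) : R :=
  Num.max (Num.min a b) (Num.min (Num.max a b) c).

Definition cwmed (eps delta : R) (z : outcome) : vec :=
  let g := grad eps delta z in
  (med3 (g g0).1 (g g1).1 (g g2).1, med3 (g g0).2 (g g1).2 (g g2).2).

Definition sumdist (eps delta : R) (z : outcome) (x : vec) : R :=
  \sum_(i < 3) vnorm (vsub x (grad eps delta z i)).

(* Krum score: min over j <> i of ||g_i - g_j||^2; the j <> i are lift i k, k : 'I_2 *)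
Definition krum_score (eps delta : R) (z : outcome) (i : 'I_3) : R :=
  let g := grad eps delta z in
  Num.min (vnorm2 (vsub (g i) (g (lift i (ord0 : 'I_2)))))
          (vnorm2 (vsub (g i) (g (lift i (ord_max : 'I_2))))).

End Defs.

(* In the orthonormal basis (u, v) the honest gradients are g_1, g_2 = (delta/2, +-eps)
   and g_3 = (-delta, 0), so E mu = 0.  With probability 1/2 we have Z_1 = Z_2, hence
   g_1 = g_2: the coordinate-wise median, the geometric median (a point of weight two
   minimizes the sum of distances, by the triangle inequality) and Krum all output g_1,
   at squared distance delta^2/4 + eps^2 from 0; this alone contributes
   delta^2/8 + eps^2/2 to the expectation.  When Z_1 <> Z_2 the coordinate-wise median
   is (delta/2 - eps) u and the geometric median is not 0, since (delta/4) u has a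
   smaller objective, which makes both inequalities strict.  Krum never selects g_3,
   whose score exceeds that of g_1, so it always outputs g_1 or g_2. *)

From HB Require Import structures.
From mathcomp Require Import all_boot all_order all_algebra ring lra.
Import Order.TTheory GRing.Theory Num.Theory.
Set Implicit Arguments. Unset Strict Implicit.
Local Open Scope ring_scope.

Section Euclid.
Variable R : rcfType.
Implicit Types (x y z : vec R) (a b : R).

Lemma vnorm_ge0 x : 0 <= vnorm x.
Proof. exact: sqrtr_ge0. Qed.

Lemma vnorm2_ge0 x : 0 <= vnorm2 x.
Proof. by rewrite addr_ge0 ?sqr_ge0. Qed.

Lemma sqr_vnorm x : vnorm x ^+ 2 = vnorm2 x.
Proof. exact/sqr_sqrtr/vnorm2_ge0. Qed.

Lemma sqrtr_le a b : 0 <= b -> a <= b ^+ 2 -> Num.sqrt a <= b.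
Proof. by move=> b0 ab; rewrite -(ger0_norm b0) -sqrtr_sqr ler_sqrt ?sqr_ge0. Qed.

Lemma vnorm2_eq0 x : vnorm2 x = 0 -> x = vzero R.
Proof.
case: x => x1 x2 /eqP; rewrite /vnorm2 /= paddr_eq0 ?sqr_ge0 // !sqrf_eq0.
by case/andP => /eqP -> /eqP ->.
Qed.

Lemma vnorm_eq0 x : vnorm x = 0 -> x = vzero R.
Proof. by move=> h; apply: vnorm2_eq0; rewrite -sqr_vnorm h expr0n. Qed.

Lemma vnorm2_gt0 x : x != vzero R -> 0 < vnorm2 x.
Proof. by move=> /eqP nz; rewrite lt_def vnorm2_ge0 andbT; apply/eqP => /vnorm2_eq0. Qed.

Lemma vsubx0 x : vsub x (vzero R) = x.
Proof. by case: x => x1 x2; rewrite /vsub /= !subr0. Qed.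

Lemma vnorm_subxx x : vnorm (vsub x x) = 0.
Proof. by rewrite /vnorm /vnorm2 /vsub !subrr expr0n addr0 sqrtr0. Qed.

Lemma vsub_eq0 x y : vsub x y = vzero R -> x = y.
Proof. by case: x y => x1 x2 [y1 y2] [/subr0_eq -> /subr0_eq ->]. Qed.

Lemma vnorm_subC x y : vnorm (vsub x y) = vnorm (vsub y x).
Proof. by rewrite /vnorm /vnorm2 /vsub /= -(sqrrN (x.1 - _)) -(sqrrN (x.2 - _)) !opprB. Qed.

Lemma dot_le_vnorm x y : x.1 * y.1 + x.2 * y.2 <= vnorm x * vnorm y.
Proof.
rewrite -sqrtrM ?vnorm2_ge0 //; apply: le_trans (ler_norm _) _.
rewrite -sqrtr_sqr ler_sqrt; last by rewrite mulr_ge0 ?vnorm2_ge0.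
rewrite /vnorm2; have := sqr_ge0 (x.1 * y.2 - x.2 * y.1); nra.
Qed.

Lemma vnorm_vadd_le x y : vnorm (vadd x y) <= vnorm x + vnorm y.
Proof.
apply: sqrtr_le; first by rewrite addr_ge0 ?vnorm_ge0.
have := dot_le_vnorm x y.
rewrite sqrrD !sqr_vnorm /vnorm2 /vadd /=; nra.
Qed.

Lemma vnorm_sub_triangle x y z :
  vnorm (vsub x z) <= vnorm (vsub x y) + vnorm (vsub y z).
Proof.
have -> : vsub x z = vadd (vsub x y) (vsub y z).
  by rewrite /vsub /vadd /=; congr pair; ring.
exact: vnorm_vadd_le.
Qed.

Lemma double_point_minimizer x P S :
  vnorm (vsub x P) + vnorm (vsub x P) + vnorm (vsub x S) <= vnorm (vsub P S) ->
  x = P.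
Proof.
move=> hx; apply/vsub_eq0/vnorm_eq0/le_anti/andP; split; last exact: vnorm_ge0.
by have := vnorm_sub_triangle P x S; rewrite [vnorm (vsub P x)]vnorm_subC; lra.
Qed.
End Euclid.

Section Median.
Variable R : rcfType.
Implicit Types a b c : R.

Lemma med3xx a c : med3 a a c = a.
Proof. by rewrite /med3 minxx maxxx max_l // ge_min lexx. Qed.

Lemma med3C a b c : med3 a b c = med3 b a c.
Proof. by rewrite /med3 minC [Num.max a b]maxC. Qed.

Lemma med3_between a b c : b <= a -> a <= c -> med3 a b c = a.
Proof. by move=> ba ac; rewrite /med3 (min_r ba) (max_l ba) (min_l ac) (max_r ba). Qed.

Lemma med3_between_rev a b c : c <= a -> a <= b -> med3 a b c = a.
Proof.
by move=> ca ab; rewrite /med3 (min_l ab) (max_r ab) (min_r (le_trans ca ab)) (max_l ca).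
Qed.
End Median.

Section Expectation.
Variable R : rcfType.
Implicit Types f h : outcome -> R.

Lemma Ex_expand f :
  Ex f = (f (true, true) + f (true, false) + f (false, true) + f (false, false)) / 4.
Proof.
rewrite /Ex (eq_bigr (fun z => f (z.1, z.2))); last by case.
by rewrite -(pair_bigA _ (fun a b => f (a, b))) /= !big_bool /= mulrC mul1r addrA.
Qed.

Lemma eq_Ex f h : f =1 h -> Ex f = Ex h.
Proof. by move=> fh; rewrite /Ex (eq_bigr _ (fun z _ => fh z)). Qed.

Lemma ler_Ex f h : (forall z, f z <= h z) -> Ex f <= Ex h.
Proof. by move=> fh; rewrite /Ex ler_pM2l ?ler_sum // divr_gt0. Qed.

Lemma eq_Evec (f h : outcome -> vec R) : f =1 h -> Evec f = Evec h.
Proof. by move=> fh; rewrite /Evec !(eq_Ex (fun z => congr1 _ (fh z))). Qed.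

Lemma Ex_cst (c : R) : Ex (fun=> c) = c.
Proof. by rewrite Ex_expand; field. Qed.
End Expectation.

Section Coordinates.
Variable R : rcfType.
Implicit Types a b c d : R.

Definition uv a b : vec R := vadd (vscale a (uvec R)) (vscale b (vvec R)).

Lemma inv_sqrt2_gt0 : 0 < 1 / Num.sqrt 2 :> R.
Proof. by rewrite divr_gt0 // sqrtr_gt0 ltr0n. Qed.

Lemma sqr_inv_sqrt2 : (1 / Num.sqrt 2 : R) ^+ 2 = 1 / 2.
Proof. by rewrite expr_div_n expr1n sqr_sqrtr // ler0n. Qed.

Lemma vnorm2_uv a b : vnorm2 (uv a b) = a ^+ 2 + b ^+ 2.
Proof.
rewrite /vnorm2 /uv /vadd /vscale /uvec /vvec /=.
set s := 1 / Num.sqrt 2.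
have -> : (a * - s + b * s) ^+ 2 + (a * s + b * s) ^+ 2 =
          2 * s ^+ 2 * (a ^+ 2 + b ^+ 2) by ring.
by rewrite sqr_inv_sqrt2; field.
Qed.

Lemma vnorm_uv a b : vnorm (uv a b) = Num.sqrt (a ^+ 2 + b ^+ 2).
Proof. by rewrite /vnorm vnorm2_uv. Qed.

Lemma vsub_uv a b c d : vsub (uv a b) (uv c d) = uv (a - c) (b - d).
Proof. by rewrite /vsub /uv /vadd /vscale /=; congr pair; ring. Qed.

Lemma vadd_uv a b c d : vadd (uv a b) (uv c d) = uv (a + c) (b + d).
Proof. by rewrite /uv /vadd /vscale /=; congr pair; ring. Qed.

Lemma vscale_uv k a b : vscale k (uv a b) = uv (k * a) (k * b).
Proof. by rewrite /uv /vadd /vscale /=; congr pair; ring. Qed.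

Lemma uv00 : uv 0 0 = vzero R.
Proof. by rewrite /uv /vadd /vscale /vzero /=; congr pair; ring. Qed.

Lemma vnorm_uv0 a : vnorm (uv a 0) = `|a|.
Proof. by rewrite vnorm_uv expr0n addr0 sqrtr_sqr. Qed.

Lemma Evec_uv (f h : outcome -> R) :
  Evec (fun z => uv (f z) (h z)) = uv (Ex f) (Ex h).
Proof. by rewrite /Evec !Ex_expand /uv /vadd /vscale /=; congr pair; ring. Qed.
End Coordinates.

Lemma g0E : g0 = Ordinal (isT : (0 < 3)%N).
Proof. by apply: val_inj; rewrite /= inordK. Qed.

Lemma g1E : g1 = Ordinal (isT : (1 < 3)%N).
Proof. by apply: val_inj; rewrite /= inordK. Qed.

Lemma g2E : g2 = Ordinal (isT : (2 < 3)%N).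
Proof. by apply: val_inj; rewrite /= inordK. Qed.

Lemma ord3P (i : 'I_3) : [\/ i = g0, i = g1 | i = g2].
Proof.
rewrite g0E g1E g2E; case: i => -[|[|[|//]]] lti;
  [constructor 1 | constructor 2 | constructor 3]; exact: val_inj.
Qed.

Lemma lift_g0_ord0 : lift g0 (ord0 : 'I_2) = g1.
Proof. by apply: val_inj; rewrite g0E g1E. Qed.

Lemma lift_g2_ord0 : lift g2 (ord0 : 'I_2) = g0.
Proof. by apply: val_inj; rewrite g2E g0E. Qed.

Lemma lift_g2_ord_max : lift g2 (ord_max : 'I_2) = g1.
Proof. by apply: val_inj; rewrite g2E g1E. Qed.

Section Example.
Variables (R : rcfType) (eps delta : R).
Local Notation g := (grad eps delta).

Definition noise (b : bool) : R := eps * (2 * bern R b - 1).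

Lemma noiseT : noise true = eps.
Proof. by rewrite /noise /bern /=; ring. Qed.

Lemma noiseF : noise false = - eps.
Proof. by rewrite /noise /bern /=; ring. Qed.

Lemma sqr_noise b : noise b ^+ 2 = eps ^+ 2.
Proof. by case: b; rewrite ?noiseT ?noiseF ?sqrrN. Qed.

Lemma grad_g0 z : g z g0 = uv (delta / 2) (noise z.1).
Proof. by rewrite g0E. Qed.

Lemma grad_g1 z : g z g1 = uv (delta / 2) (noise z.2).
Proof. by rewrite g1E. Qed.

Lemma grad_g2 z : g z g2 = uv (- delta) 0.
Proof. by rewrite g2E /grad /uv /vadd /vscale /=; congr pair; ring. Qed.

Lemma Ex_noise1 : Ex (fun z => noise z.1) = 0.
Proof. by rewrite Ex_expand /= noiseT noiseF; field. Qed.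

Lemma Ex_noise2 : Ex (fun z => noise z.2) = 0.
Proof. by rewrite Ex_expand /= noiseT noiseF; field. Qed.

Lemma Evec_grad_g0 : Evec (g^~ g0) = uv (delta / 2) 0.
Proof. by rewrite (eq_Evec grad_g0) Evec_uv Ex_cst Ex_noise1. Qed.

Lemma Evec_grad_g1 : Evec (g^~ g1) = uv (delta / 2) 0.
Proof. by rewrite (eq_Evec grad_g1) Evec_uv Ex_cst Ex_noise2. Qed.

Lemma Evec_grad_g2 : Evec (g^~ g2) = uv (- delta) 0.
Proof. by rewrite (eq_Evec grad_g2) Evec_uv !Ex_cst. Qed.

Lemma Evec_muavg :
  Evec (muavg eps delta) =
  vscale (1 / 3) (vadd (Evec (g^~ g0)) (vadd (Evec (g^~ g1)) (Evec (g^~ g2)))).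
Proof. by rewrite /Evec /muavg /vscale /vadd !Ex_expand /=; congr pair; field. Qed.

Lemma Evec_muavg_eq0 : Evec (muavg eps delta) = vzero R.
Proof.
rewrite Evec_muavg Evec_grad_g0 Evec_grad_g1 Evec_grad_g2 -uv00.
by rewrite !vadd_uv vscale_uv; congr uv; field.
Qed.

Lemma vnorm2_grad_g0 z : vnorm2 (g z g0) = delta ^+ 2 / 4 + eps ^+ 2.
Proof. by rewrite grad_g0 vnorm2_uv sqr_noise; field. Qed.

Lemma vnorm2_grad_g1 z : vnorm2 (g z g1) = delta ^+ 2 / 4 + eps ^+ 2.
Proof. by rewrite grad_g1 vnorm2_uv sqr_noise; field. Qed.

Lemma Ex_grad_dev_le i :
  Ex (fun z => vnorm2 (vsub (g z i) (Evec (g^~ i)))) <= eps ^+ 2.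
Proof.
rewrite -[eps ^+ 2]Ex_cst; apply: ler_Ex => z.
case: (ord3P i) => ->.
- by rewrite grad_g0 Evec_grad_g0 vsub_uv vnorm2_uv subrr subr0 sqr_noise expr0n add0r.
- by rewrite grad_g1 Evec_grad_g1 vsub_uv vnorm2_uv subrr subr0 sqr_noise expr0n add0r.
- by rewrite grad_g2 Evec_grad_g2 vsub_uv vnorm2_uv !subrr expr0n addr0 sqr_ge0.
Qed.

Lemma vnorm_Evec_grad_le i : 0 <= delta -> vnorm (Evec (g^~ i)) <= delta.
Proof.
move=> d0.
case: (ord3P i) => ->;
  rewrite ?Evec_grad_g0 ?Evec_grad_g1 ?Evec_grad_g2 vnorm_uv0 ?normrN ger0_norm; lra.
Qed.

Lemma cwmed_diag z : z.1 = z.2 -> cwmed eps delta z = g z g0.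
Proof.
move=> z12; have g10 : g z g1 = g z g0 by rewrite grad_g0 grad_g1 z12.
by rewrite /cwmed /= g10 !med3xx; case: (g z g0).
Qed.

Lemma cwmed_mixed z : 0 < eps -> 2 * eps < delta -> z.1 != z.2 ->
  cwmed eps delta z = uv (delta / 2 - eps) 0.
Proof.
move=> e0 ed; case: z => -[] -[] //= _;
  rewrite /cwmed grad_g0 grad_g1 grad_g2 /= noiseT noiseF /uv /vadd /vscale /uvec /vvec /=;
  have s0 := inv_sqrt2_gt0 R; set s := 1 / Num.sqrt 2 in s0 *; congr pair.
- by rewrite med3_between; [ring | nra | nra].
- by rewrite med3C med3_between_rev; [ring | nra | nra].
- by rewrite med3C med3_between; [ring | nra | nra].
- by rewrite med3_between_rev; [ring | nra | nra].
Qed.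

Lemma sumdistE z x : sumdist eps delta z x =
  vnorm (vsub x (g z g0)) + vnorm (vsub x (g z g1)) + vnorm (vsub x (g z g2)).
Proof. by rewrite /sumdist !big_ord_recl big_ord0 addr0 addrA g0E g1E g2E. Qed.

Lemma geomedian_diag z m : z.1 = z.2 ->
  (forall x, sumdist eps delta z m <= sumdist eps delta z x) -> m = g z g0.
Proof.
move=> z12 m_min; have g10 : g z g1 = g z g0 by rewrite grad_g0 grad_g1 z12.
apply: (double_point_minimizer (S := g z g2)).
by have := m_min (g z g0); rewrite !sumdistE g10 vnorm_subxx !add0r.
Qed.

Lemma vnorm_uaxis_sub_grad_g0 z p :
  vnorm (vsub (uv p 0) (g z g0)) = Num.sqrt ((p - delta / 2) ^+ 2 + eps ^+ 2).
Proof. by rewrite grad_g0 vsub_uv vnorm_uv sub0r sqrrN sqr_noise. Qed.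

Lemma vnorm_uaxis_sub_grad_g1 z p :
  vnorm (vsub (uv p 0) (g z g1)) = Num.sqrt ((p - delta / 2) ^+ 2 + eps ^+ 2).
Proof. by rewrite grad_g1 vsub_uv vnorm_uv sub0r sqrrN sqr_noise. Qed.

Lemma sumdist_uaxis z p : sumdist eps delta z (uv p 0) =
  2 * Num.sqrt ((p - delta / 2) ^+ 2 + eps ^+ 2) + `|p + delta|.
Proof.
rewrite sumdistE vnorm_uaxis_sub_grad_g0 vnorm_uaxis_sub_grad_g1 grad_g2.
by rewrite vsub_uv subr0 vnorm_uv0 opprK mulr2n mulrDl mul1r.
Qed.

(* With A, B the two square roots, A - B = (A^2 - B^2) / (A + B) and A + B < 3d/2. *)
Lemma sqrt_quarter_gap (d e : R) : 0 < e -> 2 * e < d ->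
  2 * Num.sqrt (d ^+ 2 / 16 + e ^+ 2) + 5 * d / 4 <
  2 * Num.sqrt (d ^+ 2 / 4 + e ^+ 2) + d.
Proof.
move=> e0 ed.
have A2 : Num.sqrt (d ^+ 2 / 4 + e ^+ 2) ^+ 2 = d ^+ 2 / 4 + e ^+ 2.
  by rewrite sqr_sqrtr // addr_ge0 ?sqr_ge0 // divr_ge0 ?sqr_ge0.
have B2 : Num.sqrt (d ^+ 2 / 16 + e ^+ 2) ^+ 2 = d ^+ 2 / 16 + e ^+ 2.
  by rewrite sqr_sqrtr // addr_ge0 ?sqr_ge0 // divr_ge0 ?sqr_ge0.
have A0 := sqrtr_ge0 (d ^+ 2 / 4 + e ^+ 2).
have B0 := sqrtr_ge0 (d ^+ 2 / 16 + e ^+ 2).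
set A := Num.sqrt _ in A2 A0 *; set B := Num.sqrt _ in B2 B0 *.
have AB : (A - B) * (A + B) = 3 * d ^+ 2 / 16 by rewrite -subr_sqr A2 B2; field.
have A_lt : A < 3 * d / 4 by nra.
have B_lt : B < 3 * d / 4 by nra.
by nra.
Qed.

Lemma sumdist_quarter_lt_origin z : 0 < eps -> 2 * eps < delta ->
  sumdist eps delta z (uv (delta / 4) 0) < sumdist eps delta z (vzero R).
Proof.
move=> e0 ed; rewrite -uv00 !sumdist_uaxis sub0r sqrrN add0r.
have -> : (delta / 4 - delta / 2) ^+ 2 = delta ^+ 2 / 16 by field.
have -> : (delta / 2) ^+ 2 = delta ^+ 2 / 4 by field.
rewrite !ger0_norm; try lra.
have -> : delta / 4 + delta = 5 * delta / 4 by field.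
exact: sqrt_quarter_gap.
Qed.

Lemma geomedian_neq0 z m : 0 < eps -> 2 * eps < delta ->
  (forall x, sumdist eps delta z m <= sumdist eps delta z x) -> m != vzero R.
Proof.
move=> e0 ed m_min; apply/eqP => m0; have := m_min (uv (delta / 4) 0).
by rewrite m0 leNgt sumdist_quarter_lt_origin.
Qed.

Lemma sqr_noise_sub_le a b : (noise a - noise b) ^+ 2 <= 4 * eps ^+ 2.
Proof. by case: a b => -[]; rewrite ?noiseT ?noiseF; nra. Qed.

Lemma krum_score_g0_lt_g2 z : 0 < eps -> 2 * eps < delta ->
  krum_score eps delta z g0 < krum_score eps delta z g2.
Proof.
move=> e0 ed.
have score_g0 : krum_score eps delta z g0 <= vnorm2 (vsub (g z g0) (g z g1)).
  by rewrite /krum_score lift_g0_ord0 ge_min lexx.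
rewrite /krum_score lift_g2_ord0 lift_g2_ord_max.
apply: le_lt_trans score_g0 _.
rewrite lt_min grad_g0 grad_g1 grad_g2 !vsub_uv !vnorm2_uv subrr expr0n add0r.
rewrite sub0r !sqrrN !sqr_noise.
have := sqr_noise_sub_le z.1 z.2.
have -> : (- delta - delta / 2) ^+ 2 = 9 / 4 * delta ^+ 2 by field.
by move=> h; apply/andP; split; nra.
Qed.
End Example.

Theorem mainTheorem13 (R : rcfType) (eps delta : R) :
  0 < eps -> 2 * eps < delta ->
  let g := grad eps delta in
  let Emu := Evec (muavg eps delta) in
  [/\ Emu = vscale (1 / 3) (vadd (Evec (g^~ g0))
                              (vadd (Evec (g^~ g1)) (Evec (g^~ g2)))),
      Emu = vzero R,
      (forall i : 'I_3,
         Ex (fun z => vnorm2 (vsub (g z i) (Evec (g^~ i)))) <= eps ^+ 2)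
    & (forall i : 'I_3, vnorm (vsub (Evec (g^~ i)) Emu) <= delta)] /\
  [/\ Ex (fun z => vnorm2 (vsub (cwmed eps delta z) Emu))
        > delta ^+ 2 / 8 + eps ^+ 2 / 2,
      (forall gm : outcome -> vec R,
         (forall z x, sumdist eps delta z (gm z) <= sumdist eps delta z x) ->
         Ex (fun z => vnorm2 (vsub (gm z) Emu)) > delta ^+ 2 / 8 + eps ^+ 2 / 2)
    & (forall (z : outcome) (i : 'I_3),
         (forall k : 'I_3, krum_score eps delta z i <= krum_score eps delta z k) ->
         vnorm2 (vsub (g z i) Emu) = eps ^+ 2 + delta ^+ 2 / 4)].
Proof.
move=> e0 ed g Emu; have Emu0 : Emu = vzero R := Evec_muavg_eq0 eps delta.
split; first split.
- exact: Evec_muavg.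
- exact: Emu0.
- exact: Ex_grad_dev_le.
- by move=> i; rewrite Emu0 vsubx0 vnorm_Evec_grad_le //; lra.
rewrite Emu0; split.
- rewrite Ex_expand !vsubx0 (cwmed_diag eps delta (z := (true, true))) //.
  rewrite (cwmed_diag eps delta (z := (false, false))) // !cwmed_mixed //.
  rewrite !vnorm2_grad_g0 vnorm2_uv.
  have : 0 < (delta - 2 * eps) ^+ 2 by rewrite exprn_gt0 // subr_gt0.
  nra.
- move=> gm gm_min; rewrite Ex_expand !vsubx0.
  rewrite (geomedian_diag _ (gm_min (true, true))) //.
  rewrite (geomedian_diag _ (gm_min (false, false))) //.
  have := vnorm2_gt0 (geomedian_neq0 e0 ed (gm_min (true, false))).
  have := vnorm2_gt0 (geomedian_neq0 e0 ed (gm_min (false, true))).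
  rewrite !vnorm2_grad_g0; lra.
- move=> z i i_min; rewrite vsubx0 addrC.
  case: (ord3P i) i_min => -> i_min; rewrite ?vnorm2_grad_g0 ?vnorm2_grad_g1 //.
  by have := lt_le_trans (krum_score_g0_lt_g2 z e0 ed) (i_min g0); rewrite ltxx.
Qed.
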